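(* Let $G$ be a directed graph with vertices $s,t$, let $k\ge1$, and let $C\in U^k$ satisfy $d_{\mathrm{sum}}(C)=\max_{S\in U^k}d_{\mathrm{sum}}(S)$. Then there exists $C'\in U^k_{\mathrm{lr}}$ such that $d_{\mathrm{sum}}(C')=d_{\mathrm{sum}}(C)$.
   Context: An $s$-$t$ cut of a directed graph $G$ is a set $X\subseteq E(G)$ such that removing $X$ leaves no directed $s$-$t$ path; $\Gamma_G(s,t)$ is the set of $s$-$t$ cuts of minimum cardinality. For $s$-$t$ cuts $X,Y$, write $X\le Y$ if every directed $s$-$t$ path in $G$ meets an edge of $X$ at or before an edge of $Y$. $U^k$ is the set of $k$-tuples $[X_1,\dots,X_k]$ of elements of $\Gamma_G(s,t)$ and $U^k_{\mathrm{lr}}$ the subset of those with $X_i\le X_j$ for all $i<j$. $d_{\mathrm{sum}}(X_1,\dots,X_k)=\sum_{1\le i<j\le k}|X_i\triangle X_j|$ with $\triangle$ the symmetric difference. *)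

From mathcomp Require Import all_boot.
Set Implicit Arguments. Unset Strict Implicit. Unset Printing Implicit Defensive.

Section Cuts.
Variables (V : finType) (E : rel V) (s t : V).

Definition edgeset : {set V * V} := [set x | E x.1 x.2].

Definition st_path (p : seq V) : bool :=
  [&& path E s p, last s p == t & uniq (s :: p)].

Definition pedges (p : seq V) : seq (V * V) := pairmap (fun a b => (a, b)) s p.

Definition is_cut (X : {set V * V}) : Prop :=
  X \subset edgeset /\ forall p, st_path p -> has (mem X) (pedges p).

Definition is_min_cut (X : {set V * V}) : Prop :=
  is_cut X /\ forall Y, is_cut Y -> #|X| <= #|Y|.

Definition cut_le (X Y : {set V * V}) : Prop :=
  forall p, st_path p -> find (mem X) (pedges p) <= find (mem Y) (pedges p).

Definition symdiff (A B : {set V * V}) : {set V * V} := (A :\: B) :|: (B :\: A).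

Definition inU (k : nat) (C : 'I_k -> {set V * V}) : Prop :=
  forall i, is_min_cut (C i).

Definition inUlr (k : nat) (C : 'I_k -> {set V * V}) : Prop :=
  inU C /\ forall i j : 'I_k, i < j -> cut_le (C i) (C j).

Definition dsum (k : nat) (C : 'I_k -> {set V * V}) : nat :=
  \sum_(i < k) \sum_(j < k | i < j) #|symdiff (C i) (C j)|.

End Cuts.

From mathcomp Require Import all_boot zify.
Set Implicit Arguments. Unset Strict Implicit. Unset Printing Implicit Defensive.

(* Every minimum s-t cut X consists exactly of the edges leaving the set A of
   vertices reachable from s in G - X.  Given minimum cuts C_0, ..., C_(k-1) with
   source sides A_0, ..., A_(k-1), let B_i be the set of vertices lying in at
   least k - i of the A_j, so that B_0 is contained in B_1 ... in B_(k-1), and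
   let C'_i be the set of edges leaving B_i.  If u lies in a of the A_j and v
   in b of them, the edge (u, v) leaves at most a - b of the B_i and at least
   a - b of the A_j; so no edge lies in more of the C'_i than of the C_i.  The
   C'_i are cuts and the C_i minimum, hence every edge has the same
   multiplicity in both tuples.  As an edge lying in m of the k cuts
   contributes m (k - m) to d_sum, C' has the same d_sum as C, and its nested
   source sides make it left-right ordered. *)

Lemma eq_from_leq_sum (I : finType) (f g : I -> nat) :
  (forall i, f i <= g i) -> \sum_i g i <= \sum_i f i -> f =1 g.
Proof.
move=> le_fg le_sum.
have [_ /esym] := leqif_sum (fun i (_ : true) => leqif_eq (le_fg i)).
by rewrite eqn_leq le_sum leq_sum // => /forall_inP eq_fg i; apply/eqP/eq_fg.
Qed.

Lemma card_sum_mem (T : finType) (A : {set T}) : #|A| = \sum_x (x \in A : nat).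
Proof. by rewrite -sum1_card big_mkcond; apply: eq_bigr => x _; case: (x \in A). Qed.

Lemma card_ord_interval k (P : {set 'I_k}) a b :
  {in P, forall i : 'I_k, a <= i < b} -> #|P| <= b - a.
Proof.
move=> P_ab; rewrite cardE -(size_map val) -(size_iota a (b - a)).
apply: uniq_leq_size => [|x /mapP[i]]; first by rewrite (map_inj_uniq val_inj) enum_uniq.
by rewrite mem_enum => /P_ab/andP[ai ib] ->; rewrite mem_iota /=; lia.
Qed.

Definition mult (T : finType) k (F : 'I_k -> {set T}) (x : T) : nat :=
  #|[set i | x \in F i]|.

Lemma sum_mult (T : finType) k (F : 'I_k -> {set T}) :
  \sum_x mult F x = \sum_i #|F i|.
Proof.
rewrite /mult (eq_bigr _ (fun x _ => card_sum_mem _)) exchange_big.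
by apply: eq_bigr => i _; rewrite card_sum_mem; apply: eq_bigr => x _; rewrite inE.
Qed.

Lemma sum_pairs_sym k (f : 'I_k -> 'I_k -> nat) :
  (forall i j, f i j = f j i) -> (forall i, f i i = 0) ->
  \sum_i \sum_j f i j = 2 * \sum_(i < k) \sum_(j < k | i < j) f i j.
Proof.
move=> f_sym f_diag.
have split_ltn (i : 'I_k) :
    \sum_j f i j = \sum_(j < k | i < j) f i j + \sum_(j < k | j < i) f i j.
  rewrite (bigID (fun j : 'I_k => i < j)) /=; congr (_ + _).
  rewrite [LHS]big_mkcond [RHS]big_mkcond; apply: eq_bigr => j _.
  by case: ltngtP => // /val_inj ->; rewrite f_diag.
have swap : \sum_(i < k) \sum_(j < k | j < i) f i j = \sum_(i < k) \sum_(j < k | i < j) f i j.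
  rewrite [LHS](eq_bigr _ (fun i _ => big_mkcond _ _)) exchange_big /=.
  by apply: eq_bigr => j _; rewrite [RHS]big_mkcond; apply: eq_bigr => i _; rewrite f_sym.
by rewrite (eq_bigr _ (fun i _ => split_ltn i)) big_split /= swap mul2n addnn.
Qed.

Lemma sum_pairs_neqb k (b : 'I_k -> bool) (m := #|[set i | b i]|) :
  \sum_i \sum_j (b i != b j : nat) = 2 * (m * (k - m)).
Proof.
have sum_b : \sum_i (b i : nat) = m.
  by rewrite /m card_sum_mem; apply: eq_bigr => i _; rewrite inE.
have sum_notb : \sum_i (~~ b i : nat) = k - m.
  rewrite -[in RHS](card_ord k) -(cardsC [set i | b i]) addKn card_sum_mem.
  by apply: eq_bigr => i _; rewrite !inE.
have inner i : \sum_j (b i != b j : nat) = b i * (k - m) + ~~ b i * m.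
  case: (b i); rewrite /= ?mul1n ?mul0n ?addn0 ?add0n;
    [rewrite -sum_notb | rewrite -sum_b]; apply: eq_bigr => j _; by case: (b j).
rewrite (eq_bigr _ (fun i _ => inner i)) big_split -!big_distrl /= sum_b sum_notb.
by rewrite mulnC mul2n addnn.
Qed.

Lemma dsum_mult (V : finType) k (F : 'I_k -> {set V * V}) :
  dsum F = \sum_e mult F e * (k - mult F e).
Proof.
have pairs_e e : \sum_(i < k) \sum_(j < k | i < j) ((e \in F i) != (e \in F j) : nat) =
                 mult F e * (k - mult F e).
  apply/eqP; rewrite -(eqn_pmul2l (isT : 0 < 2)) -sum_pairs_sym ?sum_pairs_neqb //.
    by move=> i j; rewrite eq_sym.
  by move=> i; rewrite eqxx.
rewrite (eq_bigr _ (fun e _ => esym (pairs_e e))) exchange_big; apply: eq_bigr => i _.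
rewrite exchange_big; apply: eq_bigr => j _; rewrite card_sum_mem.
by apply: eq_bigr => e _; rewrite !inE; case: (e \in F i); case: (e \in F j).
Qed.

Section EdgeCuts.
Variables (V : finType) (E : rel V).

Definition dcut (A : {set V}) : {set V * V} :=
  [set e in edgeset E | (e.1 \in A) && (e.2 \notin A)].

Lemma in_dcut (A : {set V}) u v : ((u, v) \in dcut A) = [&& E u v, u \in A & v \notin A].
Proof. by rewrite !inE. Qed.

Lemma has_dcut (A : {set V}) x p : x \in A -> path E x p -> last x p \notin A ->
  has (mem (dcut A)) (pairmap (fun a b => (a, b)) x p).
Proof.
elim: p x => [|y p IHp] x /=; first by move=> ->.
move=> xA /andP[Exy path_p] last_p; rewrite in_dcut Exy xA /=.
by apply/orP; case: (boolP (y \in A)) => [yA | yNA]; [right; apply: IHp | left].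
Qed.

Lemma find_dcut_mono (A B : {set V}) x p : A \subset B -> x \in A -> path E x p ->
  find (mem (dcut A)) (pairmap (fun a b => (a, b)) x p) <=
  find (mem (dcut B)) (pairmap (fun a b => (a, b)) x p).
Proof.
move=> sAB; elim: p x => [|y p IHp] x //= xA /andP[Exy path_p].
rewrite !in_dcut Exy xA (subsetP sAB x xA) /=.
case: (boolP (y \in A)) => //= yA; by rewrite (subsetP sAB y yA) ltnS IHp.
Qed.

Lemma hasN_pairmap_avoiding (X : {set V * V}) x p :
  path (fun a b => E a b && ((a, b) \notin X)) x p ->
  ~~ has (mem X) (pairmap (fun a b => (a, b)) x p).
Proof.
by elim: p x => //= y p IHp x /andP[/andP[_ xyX] /IHp]; rewrite negb_or xyX.
Qed.

Section Levels.
Variables (k : nat) (A : 'I_k -> {set V}).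

Definition level (i : 'I_k) : {set V} := [set v | k - i <= mult A v].

Lemma mult_le_size v : mult A v <= k.
Proof. by apply: leq_trans (max_card _) _; rewrite card_ord. Qed.

Lemma level_mono (i j : 'I_k) : i <= j -> level i \subset level j.
Proof.
by move=> le_ij; apply/subsetP => v; rewrite !inE; apply: leq_trans; apply: leq_sub2l.
Qed.

Lemma mem_level_full v i : (forall j, v \in A j) -> v \in level i.
Proof.
move=> vA; rewrite inE /mult (_ : [set j | v \in A j] = setT) ?cardsT ?card_ord ?leq_subr //.
by apply/setP => j; rewrite !inE vA.
Qed.

Lemma notin_level_empty v i : (forall j, v \notin A j) -> v \notin level i.
Proof.
move=> vNA; rewrite inE /mult (_ : [set j | v \in A j] = set0) ?cards0.
  by rewrite -ltnNge subn_gt0.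
by apply/setP => j; rewrite !inE (negbTE (vNA j)).
Qed.

Lemma mult_dcut_level_le e :
  mult (fun i => dcut (level i)) e <= mult (fun j => dcut (A j)) e.
Proof.
case: e => u v; case: (boolP (E u v)) => Euv; last first.
  suff -> : mult (fun i => dcut (level i)) (u, v) = 0 by [].
  by apply/eqP; rewrite cards_eq0; apply/eqP/setP => i; rewrite !inE (negbTE Euv).
have levels_uv : mult (fun i => dcut (level i)) (u, v) <= mult A u - mult A v.
  apply: leq_trans (card_ord_interval (a := k - mult A u) (b := k - mult A v) _) _.
    move=> i; rewrite !inE Euv -ltnNge /= => /andP[le_u lt_v].
    by have := ltn_ord i; lia.
  by have := mult_le_size u; lia.
have crossing_uv : mult A u - mult A v <= mult (fun j => dcut (A j)) (u, v).
  apply: leq_trans (_ : #|[set j | u \in A j] :\: [set j | v \in A j]| <= _).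
    by rewrite cardsD leq_sub2l // subset_leq_card // subsetIr.
  by apply: subset_leq_card; apply/subsetP => j; rewrite !inE Euv => /andP[-> ->].
exact: leq_trans levels_uv crossing_uv.
Qed.

End Levels.

End EdgeCuts.

Section STCuts.
Variables (V : finType) (E : rel V) (s t : V).

Lemma dcut_is_cut (A : {set V}) : s \in A -> t \notin A -> is_cut E s t (dcut E A).
Proof.
move=> sA tA; split; first by apply/subsetP => e; rewrite inE => /andP[].
by move=> p /and3P[path_p /eqP last_p _]; apply: has_dcut; rewrite ?last_p.
Qed.

Lemma cut_le_dcut (A B : {set V}) :
  A \subset B -> s \in A -> cut_le E s t (dcut E A) (dcut E B).
Proof. by move=> sAB sA p /and3P[path_p _ _]; apply: find_dcut_mono. Qed.

Definition reach (X : {set V * V}) : {set V} :=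
  [set v | connect (fun a b => E a b && ((a, b) \notin X)) s v].

Lemma mem_reach_source (X : {set V * V}) : s \in reach X.
Proof. by rewrite inE connect0. Qed.

Lemma notin_reach_sink (X : {set V * V}) : is_cut E s t X -> t \notin reach X.
Proof.
case=> _ X_cut; rewrite inE; apply/negP => /connectP[p path_p t_last].
case: (shortenP path_p) t_last => q path_q uniq_q _ t_last.
apply: (negP (hasN_pairmap_avoiding path_q)); apply: X_cut.
rewrite /st_path uniq_q -t_last eqxx !andbT.
by apply: sub_path path_q => a b /andP[].
Qed.

Lemma dcut_reach_sub (X : {set V * V}) : dcut E (reach X) \subset X.
Proof.
apply/subsetP => -[u v]; rewrite in_dcut !inE => /and3P[Euv su]; apply: contraNT => uvX.
by apply: connect_trans su (connect1 _); rewrite /= Euv uvX.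
Qed.

Lemma min_cut_dcut_reach (X : {set V * V}) : is_min_cut E s t X -> X = dcut E (reach X).
Proof.
case=> X_cut X_min; apply/eqP; rewrite eq_sym eqEcard dcut_reach_sub X_min //.
exact: dcut_is_cut (mem_reach_source X) (notin_reach_sink X_cut).
Qed.

Lemma min_cuts_of_mult_le k (C C' : 'I_k -> {set V * V}) :
  inU E s t C -> (forall i, is_cut E s t (C' i)) -> (forall e, mult C' e <= mult C e) ->
  inU E s t C' /\ mult C' =1 mult C.
Proof.
move=> C_min C'_cut le_mult.
have eq_mult : mult C' =1 mult C.
  apply: (eq_from_leq_sum le_mult); rewrite !sum_mult.
  by apply: leq_sum => i _; apply: (C_min i).2.
have eq_size : (fun i => #|C i|) =1 (fun i => #|C' i|).
  apply: (@eq_from_leq_sum _ (fun i => #|C i|)) => [i | ]; first exact: (C_min i).2.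
  by rewrite -!sum_mult (eq_bigr _ (fun e _ => eq_mult e)).
by split=> // i; split=> // Y Y_cut; rewrite -eq_size; apply: (C_min i).2.
Qed.

Lemma min_cuts_uncross k (C : 'I_k -> {set V * V}) :
  inU E s t C -> exists C' : 'I_k -> {set V * V}, inUlr E s t C' /\ mult C' =1 mult C.
Proof.
move=> C_min; pose A j := reach (C j); pose C' (i : 'I_k) := dcut E (level A i).
have C_A j : C j = dcut E (A j) := min_cut_dcut_reach (C_min j).
have s_level i : s \in level A i.
  by apply: mem_level_full => j; apply: mem_reach_source.
have t_level i : t \notin level A i.
  by apply: notin_level_empty => j; apply: notin_reach_sink; case: (C_min j).
have le_mult e : mult C' e <= mult C e.
  rewrite (_ : mult C e = mult (fun j => dcut E (A j)) e); first exact: mult_dcut_level_le.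
  by apply: eq_card => j; rewrite inE [in RHS]inE -C_A.
have C'_cut i : is_cut E s t (C' i) := dcut_is_cut (s_level i) (t_level i).
have [C'_min eq_mult] := min_cuts_of_mult_le C_min C'_cut le_mult.
exists C'; split=> //; split=> // i j lt_ij.
by apply: cut_le_dcut; [apply: level_mono; apply: ltnW | apply: s_level].
Qed.

End STCuts.

Theorem corollary1 (V : finType) (E : rel V) (s t : V) (k : nat) :
  1 <= k ->
  forall C : 'I_k -> {set V * V},
    inU E s t C ->
    (forall S : 'I_k -> {set V * V}, inU E s t S -> dsum S <= dsum C) ->
    exists C' : 'I_k -> {set V * V}, inUlr E s t C' /\ dsum C' = dsum C.
Proof.
move=> _ C C_min _.
have [C' [C'_lr eq_mult]] := min_cuts_uncross C_min.
by exists C'; split=> //; rewrite !dsum_mult; apply: eq_bigr => e _; rewrite eq_mult.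
Qed.
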